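(* Suppose $\mathbb{P}$ satisfies the margin condition for some $\kappa>0$, $\alpha>0$, that $\|\mu_a\|_\infty,\|\widehat\mu_a\|_\infty\le B<\infty$ a.s. for all $a$, and that $\max_a\|\widehat\mu_a-\mu_a\|_\infty=o_{\mathbb{P}}(1)$, where $\widehat\mu$ is constructed from a separate sample independent of $Z_1,\dots,Z_n$. Let $C^*\in\mathcal{C}_k^*$ and $\widehat R_n(C)=\frac1n\sum_{i=1}^n\|\widehat\mu(X_i)-\Pi_C(\widehat\mu(X_i))\|_2^2$. Then $$\widehat R_n(C^* )-R(C^* )=O_{\mathbb{P}}\Big(\frac1{\sqrt n}+\max_a\|\widehat\mu_a-\mu_a\|_{\mathbb{P},1}+\max_a\|\widehat\mu_a-\mu_a\|_\infty^{\alpha+1}+\frac1\kappa\max_a\big(\|\widehat\mu_a-\mu_a\|_\infty\|\widehat\mu_a-\mu_a\|_{\mathbb{P},1}\big)\Big).$$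
   Context: Data: i.i.d. $Z_1,\dots,Z_n$ copies of $Z=(Y,A,X)\sim\mathbb{P}$, $A\in\mathcal{A}=\{1,\dots,p\}$, $X\in\mathbb{R}^d$. $\mu_a(X)=\mathbb{E}(Y\mid X,A=a)$, $\mu=(\mu_1(X),\dots,\mu_p(X))^\top$. Codebooks $C=\{c_1,\dots,c_k\}\subset\mathbb{R}^p$; $\mathcal{C}_k$ those of size $k$ in the image of $\mu$; $\Pi_C(x)=\arg\min_{c\in C}\|c-x\|_2^2$; $R(C)=\mathbb{E}\|\mu-\Pi_C(\mu)\|_2^2$; $\mathcal{C}_k^*$ its minimizers. $V_j(C^* )=\{x:\|x-c_j^*\|_2\le\|x-c_i^*\|_2\ \forall i\ne j\}$; $N_{C^*}(t)=\bigcup_j\{x\in V_j(C^* ):|\,\|x-c_j^*\|_2-\min_{i\ne j}\|x-c_i^*\|_2\,|\le t\}$; margin condition (radius $\kappa$, rate $\alpha$): for $0\le t\le\kappa$, $\sup_{C^*\in\mathcal{C}_k^*}\mathbb{P}(\mu\in N_{C^*}(t))\lesssim t^\alpha$. $\|f\|_{\mathbb{P},1}=\int|f|d\mathbb{P}$ with $\widehat\mu$ held fixed, $\|\cdot\|_\infty$ sup norm. *)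

From HB Require Import structures.
From mathcomp Require Import all_boot all_order all_algebra.
From mathcomp Require Import finmap.
From mathcomp Require Import all_classical all_reals all_analysis.
Set Implicit Arguments. Unset Strict Implicit. Unset Printing Implicit Defensive.
Import Order.TTheory GRing.Theory Num.Theory.
Local Open Scope classical_set_scope.

Local Open Scope ring_scope.

Section Defs.
Variable R : realType.

Definition sqn (p : nat) (v : 'rV[R]_p) : R := \sum_(a < p) (v 0 a) ^+ 2.
Definition norm2 (p : nat) (v : 'rV[R]_p) : R := Num.sqrt (sqn v).

Definition proj_codebook (p : nat) (C : {fset 'rV[R]_p}) (x : 'rV[R]_p) : 'rV[R]_p :=
  xget 0 [set c | c \in C /\ forall c', c' \in C -> sqn (x - c) <= sqn (x - c')].

Context (dT : measure_display) (T : measurableType dT).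

Definition codebook (p : nat) (mu : T -> 'rV[R]_p) (k : nat)
  (C : {fset 'rV[R]_p}) : Prop :=
  (#|` C|)%fset = k /\ (forall c, c \in C -> exists x, mu x = c).

Definition risk (PX : probability T R) (p : nat) (mu : T -> 'rV[R]_p)
  (C : {fset 'rV[R]_p}) : R :=
  fine (\int[PX]_x (sqn (mu x - proj_codebook C (mu x)))%:E).

Definition optimal (PX : probability T R) (p : nat) (mu : T -> 'rV[R]_p)
  (k : nat) (C : {fset 'rV[R]_p}) : Prop :=
  codebook mu k C /\ forall C', codebook mu k C' -> risk PX mu C <= risk PX mu C'.

Definition voronoi (p : nat) (C : {fset 'rV[R]_p}) (c : 'rV[R]_p) : set 'rV[R]_p :=
  [set x | forall c', c' \in C -> c' != c -> norm2 (x - c) <= norm2 (x - c')].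

(** N_C(t); the min over the (possibly empty) set of other codewords is an
    extended-real infimum (+oo when empty) *)
Definition margin_nbhd (p : nat) (C : {fset 'rV[R]_p}) (t : R) : set 'rV[R]_p :=
  [set x | exists c, c \in C /\ voronoi C c x /\
    (`| (norm2 (x - c))%:E -
        ereal_inf [set (norm2 (x - c'))%:E | c' in [set c' | c' \in C /\ c' != c]]
     | <= t%:E)%E].

Definition margin_condition (PX : probability T R) (p : nat) (mu : T -> 'rV[R]_p)
  (k : nat) (kappa alpha : R) : Prop :=
  exists c0 : R, 0 < c0 /\
    forall t, 0 <= t <= kappa -> forall C, optimal PX mu k C ->
      (PX (mu @^-1` margin_nbhd C t) <= (c0 * t `^ alpha)%:E)%E.

Definition supnorm (f : T -> R) : R := sup [set `|f x| | x in [set: T]].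
Definition L1norm (PX : probability T R) (f : T -> R) : R :=
  fine (\int[PX]_x (`|f x|)%:E).

Context (dO : measure_display) (Omega : measurableType dO).

(** an event "holds with (inner) probability at least 1 - eps" *)
Definition whp (P : probability Omega R) (eps : R) (E : set Omega) : Prop :=
  exists A, measurable A /\ (P A >= (1 - eps)%:E)%E /\ A `<=` E.

Definition bigO_in_prob (P : probability Omega R) (W V : nat -> Omega -> R) : Prop :=
  forall eps, 0 < eps -> exists M, 0 < M /\ exists N, forall n, (N <= n)%N ->
    whp P eps [set w | `|W n w| <= M * V n w].

Definition littleoP1 (P : probability Omega R) (W : nat -> Omega -> R) : Prop :=
  forall eps delta, 0 < eps -> 0 < delta -> exists N, forall n, (N <= n)%N ->
    whp P eps [set w | `|W n w| <= delta].

Context (dS : measure_display) (S : measurableType dS).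

(** D (the auxiliary sample from which muhat is built) and X_0, ..., X_{n-1}
    are mutually independent, and each X_i has law PX *)
Definition indep_sample (P : probability Omega R) (PX : probability T R)
  (D : Omega -> S) (X : nat -> Omega -> T) (n : nat) : Prop :=
  forall (B : set S) (A : nat -> set T), measurable B ->
    (forall i, measurable (A i)) ->
    P (D @^-1` B `&` \bigcap_(i in `I_n) (X i @^-1` A i)) =
    (P (D @^-1` B) * \prod_(i < n) PX (A i))%E.

End Defs.

(* Given the auxiliary sample, the losses ||muhat(X_i) - Pi_C*(muhat(X_i))||^2
   are i.i.d.  Where muhat is bounded by B they are at most 4 B^2 p, so truncating
   them at that level changes nothing almost surely.  Centred at their conditional
   mean, the truncated losses are uncorrelated (the cross terms vanish by Fubini
   and independence), so Chebyshev bounds their average by O(1/sqrt n).  Since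
   u |-> ||u - Pi_C(u)||^2 is 4B-Lipschitz for the l1 distance on vectors bounded
   by B, the conditional mean is within 4 B sum_a ||muhat_a - mu_a||_{P,1} of
   the risk of C*. *)

From HB Require Import structures.
From mathcomp Require Import all_boot all_order all_algebra.
From mathcomp Require Import finmap.
From mathcomp Require Import all_classical all_reals all_analysis.
From mathcomp Require Import measurable_realfun.
From mathcomp Require Import ring lra.
Set Implicit Arguments. Unset Strict Implicit. Unset Printing Implicit Defensive.
Import Order.TTheory GRing.Theory Num.Theory.
Local Open Scope classical_set_scope.
Local Open Scope ring_scope.

Section quantization_loss.
Variables (R : realType) (p : nat).
Implicit Types (C : {fset 'rV[R]_p}) (u v c : 'rV[R]_p) (B : R).

Definition quantization_loss C u : R := sqn (u - proj_codebook C u).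

Definition coord_bounded B u := forall a, `|u 0 a| <= B.

Lemma sqn_ge0 u : 0 <= sqn u.
Proof. by apply: sumr_ge0 => a _; exact: sqr_ge0. Qed.

Lemma quantization_loss_ge0 C u : 0 <= quantization_loss C u.
Proof. exact: sqn_ge0. Qed.

Lemma proj_codebook_fset0 u : proj_codebook fset0 u = 0.
Proof. by rewrite /proj_codebook; case: xgetP => // y _ []. Qed.

Lemma proj_codebook_spec C u c0 : c0 \in C ->
  proj_codebook C u \in C /\
  forall c, c \in C -> quantization_loss C u <= sqn (u - c).
Proof.
move=> c0C; rewrite /quantization_loss /proj_codebook.
case: xgetP => [y -> [] //|no_min]; exfalso.
have [c _ c_min] := @arg_minP _ _ C [` c0C]%fset predT (fun c : C => sqn (u - val c)) isT.
apply: (no_min (val c)); split => [|c' c'C]; first exact: valP.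
exact: (c_min [` c'C]%fset).
Qed.

Lemma quantization_lossE C u c0 : c0 \in C ->
  quantization_loss C u = \big[Num.min/sqn (u - c0)]_(c <- enum_fset C) sqn (u - c).
Proof.
move=> c0C; have [projC proj_min] := proj_codebook_spec u c0C.
apply/le_anti/andP; split; last exact: ge_bigmin_seq.
rewrite big_seq; apply: le_bigmin => [|c]; exact: proj_min.
Qed.

Lemma sqn_sub_lipschitz B u v c : coord_bounded B u -> coord_bounded B v ->
  coord_bounded B c ->
  `|sqn (u - c) - sqn (v - c)| <= 4 * B * \sum_(a < p) `|u 0 a - v 0 a|.
Proof.
move=> hu hv hc; rewrite /sqn -sumrB mulr_sumr.
apply: le_trans (ler_norm_sum _ _ _) _; apply: ler_sum => a _; rewrite !mxE.
have -> : (u 0 a - c 0 a) ^+ 2 - (v 0 a - c 0 a) ^+ 2 =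
          (u 0 a - v 0 a) * (u 0 a + v 0 a - 2 * c 0 a) by ring.
rewrite normrM mulrC ler_wpM2r //.
apply: le_trans (ler_normB _ _) _; rewrite normrM ger0_norm //.
have := ler_normD (u 0 a) (v 0 a); have := hu a; have := hv a; have := hc a; lra.
Qed.

Lemma quantization_loss_lipschitz B C u v :
  (forall c, c \in C -> coord_bounded B c) -> coord_bounded B u -> coord_bounded B v ->
  `|quantization_loss C u - quantization_loss C v|
    <= 4 * B * \sum_(a < p) `|u 0 a - v 0 a|.
Proof.
move=> hC hu hv; have [C0|[c0 c0C]] := fset_0Vmem C.
  rewrite /quantization_loss C0 !proj_codebook_fset0; apply: sqn_sub_lipschitz => // a.
  by rewrite mxE normr0; exact: le_trans (normr_ge0 _) (hu a).
have [pu min_u] := proj_codebook_spec u c0C; have [pv min_v] := proj_codebook_spec v c0C.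
(* Compare u with the codeword nearest to v, and v with the one nearest to u. *)
have := sqn_sub_lipschitz hu hv (hC _ pv); have := sqn_sub_lipschitz hv hu (hC _ pu).
under eq_bigr do rewrite distrC.
have := min_u _ pv; have := min_v _ pu; rewrite /quantization_loss.
move: (\sum_(a < p) _) => s; rewrite !ler_norml; lra.
Qed.

Lemma quantization_loss_le B C u :
  (forall c, c \in C -> coord_bounded B c) -> coord_bounded B u ->
  quantization_loss C u <= 4 * B ^+ 2 * p%:R.
Proof.
move=> hC hu; have proj_bounded : coord_bounded B (proj_codebook C u).
  have [C0|[c0 c0C]] := fset_0Vmem C; last exact/hC/(proj_codebook_spec u c0C).1.
  by rewrite C0 proj_codebook_fset0 => a; rewrite mxE normr0; exact: le_trans (hu a).
apply: (@le_trans _ _ (\sum_(a < p) 4 * B ^+ 2)); last first.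
  by rewrite sumr_const card_ord mulr_natr.
apply: ler_sum => a _; rewrite !mxE.
have -> : 4 * B ^+ 2 = (2 * B) ^+ 2 by rewrite exprMn; congr (_ * _); ring.
rewrite -[_ ^+ 2]real_normK ?num_real // ler_sqr ?nnegrE //.
  by apply: le_trans (ler_normB _ _) _; have := hu a; have := proj_bounded a; lra.
by have := hu a; have := normr_ge0 (u 0 a); lra.
Qed.

End quantization_loss.

Section measurable_quantization_loss.
Context d (Z : measurableType d) (R : realType) (p : nat).

Lemma measurable_bigmin_seq (I : Type) (r : seq I) (f0 : Z -> R) (F : I -> Z -> R) :
  measurable_fun setT f0 -> (forall i, measurable_fun setT (F i)) ->
  measurable_fun setT (fun z => \big[Num.min/f0 z]_(i <- r) F i z).
Proof.
move=> mf0 mF; elim: r => [|i r IH]; first by under eq_fun do rewrite big_nil.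
by under eq_fun do rewrite big_cons; exact: measurable_minr.
Qed.

Lemma measurable_sqn (g : Z -> 'rV[R]_p) :
  (forall a, measurable_fun setT (fun z => g z 0 a)) ->
  measurable_fun setT (fun z => sqn (g z)).
Proof.
move=> mg; apply: (@measurable_sum _ _ _ _ _ _ (fun a z => g z 0 a ^+ 2)) => a.
exact: measurableT_comp (exprn_measurable _) (mg a).
Qed.

Lemma measurable_quantization_loss (C : {fset 'rV[R]_p}) (g : Z -> 'rV[R]_p) :
  (forall a, measurable_fun setT (fun z => g z 0 a)) ->
  measurable_fun setT (fun z => quantization_loss C (g z)).
Proof.
move=> mg; have msub c : measurable_fun setT (fun z => sqn (g z - c)).
  apply: measurable_sqn => a.
  rewrite (_ : (fun z => _) = (fun z => g z 0 a - c 0 a)); first exact: measurable_funB.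
  by apply/funext => z; rewrite !mxE.
have [->|[c0 c0C]] := fset_0Vmem C.
  by under eq_fun do rewrite /quantization_loss proj_codebook_fset0; exact: msub.
under eq_fun do rewrite (quantization_lossE _ c0C).
exact: measurable_bigmin_seq.
Qed.

End measurable_quantization_loss.

Lemma bounded_integrable d (T : measurableType d) (R : realType)
    (P : probability T R) (f : T -> R) (K : R) :
  measurable_fun setT f -> (forall x, `|f x| <= K) -> P.-integrable setT (EFin \o f).
Proof.
move=> mf fK; apply: measurable_bounded_integrable => //.
  exact: le_lt_trans (probability_le1 _ measurableT) (ltey _).
exists K; split; first exact: num_real.
by move=> M KM x _; exact: le_trans (fK x) (ltW KM).
Qed.

Section independence.
Local Open Scope ereal_scope.
Context (R : realType) (dO dT dS : measure_display) (Omega : measurableType dO)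
  (T : measurableType dT) (S : measurableType dS).
Variables (P : probability Omega R) (PX : probability T R).

Lemma indep_sample_triple (D : Omega -> S) (X : nat -> Omega -> T) (n i j : nat) :
  indep_sample P PX D X n -> (i < n)%N -> (j < n)%N -> i != j ->
  forall A B C, measurable A -> measurable B -> measurable C ->
  P (D @^-1` A `&` X i @^-1` B `&` X j @^-1` C) = P (D @^-1` A) * PX B * PX C.
Proof.
move=> ind ltin ltjn neqij A B C mA mB mC.
pose F k := if k == i then B else if k == j then C else setT.
have mF k : measurable (F k) by rewrite /F; case: ifP => // _; case: ifP.
have Fj : F j = C by rewrite /F eq_sym (negbTE neqij) eqxx.
have capF : \bigcap_(k in `I_n) X k @^-1` F k = X i @^-1` B `&` X j @^-1` C.
  apply/seteqP; split => [w XF|w [XiB XjC] k _].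
    by split; [have := XF i ltin; rewrite /F eqxx | have := XF j ltjn; rewrite Fj].
  by rewrite /F; case: eqP => [->//|_]; case: eqP => [->//|].
have prodF : \prod_(k < n) PX (F k) = PX B * PX C.
  rewrite (bigD1 (Ordinal ltin)) //= (bigD1 (Ordinal ltjn)) //=; last first.
    by rewrite -val_eqE /= eq_sym.
  rewrite big1 ?mule1 ?Fj /F ?eqxx // => k /andP[/negbTE ki /negbTE kj].
  by move: ki kj; rewrite -!val_eqE /= => -> ->; rewrite probability_setT.
by rewrite -setIA -capF ind // prodF muleA.
Qed.

End independence.

Section joint_law.
Local Open Scope ereal_scope.
Context (R : realType) (dO dT dS : measure_display) (Omega : measurableType dO)
  (T : measurableType dT) (S : measurableType dS).
Variables (P : probability Omega R) (PX : probability T R).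
Variables (D : Omega -> S) (Xi Xj : Omega -> T).
Hypotheses (mD : measurable_fun setT D) (mXi : measurable_fun setT Xi)
  (mXj : measurable_fun setT Xj).
Hypothesis indep3 : forall A B C, measurable A -> measurable B -> measurable C ->
  P (D @^-1` A `&` Xi @^-1` B `&` Xj @^-1` C) = P (D @^-1` A) * PX B * PX C.

Definition sample_law := distribution P (mfun_Sub (mem_set mD)).

Let Psi w := (D w, Xi w).

Let mPsi : measurable_fun setT Psi.
Proof. exact: measurable_fun_pair. Qed.

Lemma joint_law_pair (C : set T) (E : set (S * T)) : measurable C -> measurable E ->
  P (Psi @^-1` E `&` Xj @^-1` C) = (sample_law \x PX) E * PX C.
Proof.
move=> mC mE; have mXjC : measurable (Xj @^-1` C) by rewrite -[_ @^-1` _]setTI; exact: mXj.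
have finC : PX C = (fine (PX C))%:E by rewrite fineK // fin_num_measure.
(* The measure instance of [pushforward] depends on a measurability proof that
   unification cannot infer, so it is named explicitly. *)
pose nu := measure_function_pushforward__canonical__measure_function_Measure
  (mrestr P mXjC) mPsi.
pose lam := mscale (NngNum (fine_ge0 (measure_ge0 PX C))) (sample_law \x PX).
rewrite muleC finC; change (nu E = lam E).
pose G : set (set (S * T)) :=
  [set C | exists A, measurable A /\ exists B, measurable B /\ C = A `*` B].
apply: (measure_unique G (fun=> setT)) => //.
- rewrite measurable_prod_measurableType //; congr (<<s _ >>).
  rewrite predeqE; split => [[A mA [B mB <-]]|[A [mA [B [mB ->]]]]].
    by exists A; split => //; exists B.
  by exists A => //; exists B.
- move=> /= _ _ [X1 [mX1 [X2 [mX2 ->]]]] [Y1 [mY1 [Y2 [mY2 ->]]]].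
  rewrite -setXI; exists (X1 `&` Y1); split; first exact: measurableI.
  by exists (X2 `&` Y2); split => //; exact: measurableI.
- by move=> _; exists setT; split => //; exists setT; split => //; rewrite setXTT.
- by rewrite bigcup_const.
- move=> _ [A [mA [B [mB ->]]]].
  rewrite /nu /= /pushforward /mrestr.
  transitivity ((fine (PX C))%:E * (sample_law \x PX) (A `*` B)); last by [].
  rewrite product_measure1E //.
  have -> : Psi @^-1` (A `*` B) `&` Xj @^-1` C = D @^-1` A `&` Xi @^-1` B `&` Xj @^-1` C.
    by apply/seteqP; split => w /= [[? ?] ?].
  by rewrite indep3 // -finC [RHS]muleC.
- move=> _; apply: le_lt_trans (probability_le1 _ _) (ltey _).
  by apply: measurableI => //; rewrite -[_ @^-1` _]setTI; exact: mPsi.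
Qed.

Lemma joint_law_triple (E : set ((S * T) * T)) : measurable E ->
  P ((fun w => ((D w, Xi w), Xj w)) @^-1` E) = ((sample_law \x PX) \x PX) E.
Proof.
move=> mE; have mPhi : measurable_fun setT (fun w => ((D w, Xi w), Xj w)).
  exact: measurable_fun_pair.
symmetry.
apply: (@product_measure_unique _ _ _ _ R (sample_law \x PX : probability _ R) PX
  (distribution P (mfun_Sub (mem_set mPhi)))) => [E1 C mE1 mC|//].
exact: joint_law_pair.
Qed.

End joint_law.

Lemma chebyshev_second_moment d (Omega : measurableType d) (R : realType)
    (P : probability Omega R) (Y : Omega -> R) (t : R) :
  measurable_fun setT Y -> 0 < t ->
  ((t ^+ 2)%:E * P [set w | (t <= `|Y w|)%R] <= \int[P]_w ((Y w) ^+ 2)%:E)%E.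
Proof.
move=> mY t0; pose Y' : {RV P >-> R} := mfun_Sub (mem_set mY).
have := @markov _ _ _ P Y' (fun r => r ^+ 2) t t0 (exprn_measurable 2)
  (fun r _ => sqr_ge0 r) (@lerXn2r R 2).
rewrite unlock /=.
under eq_integral do rewrite /= real_normK ?num_real //.
by under eq_set do rewrite lee_fin.
Qed.

Lemma measurable_norm_ge d (Omega : measurableType d) (R : realType)
    (f : Omega -> R) (t : R) :
  measurable_fun setT f -> measurable [set w | t <= `|f w|].
Proof.
move=> mf; rewrite -(preimage_itvcy (fun w => `|f w|)) -[X in measurable X]setTI.
have mnf : measurable_fun setT (fun w => `|f w|) by exact: measurableT_comp.
exact: mnf measurableT _ (measurable_itv _).
Qed.

Section centered_sum.
Local Open Scope ereal_scope.
Context (R : realType) (dO dT dS : measure_display) (Omega : measurableType dO)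
  (T : measurableType dT) (S : measurableType dS).
Variables (P : probability Omega R) (PX : probability T R).
Variables (D : Omega -> S) (X : nat -> Omega -> T) (n : nat).
Hypotheses (mD : measurable_fun setT D) (mX : forall i, measurable_fun setT (X i)).
Hypothesis ind : indep_sample P PX D X n.
Variables (H : S * T -> R) (K : R).
Hypotheses (mH : measurable_fun setT H) (HK : forall z, (`|H z| <= K)%R).
Hypothesis H_centered : forall s, \int[PX]_y (H (s, y))%:E = 0.

Let HD i w := H (D w, X i w).

Let mHD i : measurable_fun setT (HD i).
Proof. by apply: measurableT_comp mH _; exact: measurable_fun_pair. Qed.

Let HD2K i j w : (`|HD i w * HD j w| <= K ^+ 2)%R.
Proof. by rewrite normrM expr2; exact: ler_pM (HK _) (HK _). Qed.

Lemma integral_cross_term i j : (i < n)%N -> (j < n)%N -> i != j ->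
  \int[P]_w (HD i w * HD j w)%:E = 0.
Proof.
move=> ltin ltjn neqij.
have mPhi : measurable_fun setT (fun w => ((D w, X i w), X j w)).
  by apply: measurable_fun_pair; [exact: measurable_fun_pair|exact: mX].
pose Phi : {RV P >-> _} := mfun_Sub (mem_set mPhi).
pose phi (z : (S * T) * T) := (H z.1 * H (z.1.1, z.2))%R.
have mphi : measurable_fun setT phi.
  apply: measurable_funM; first exact: measurableT_comp mH measurable_fst.
  apply: measurableT_comp mH _; apply: measurable_fun_pair => //.
  exact: measurableT_comp measurable_fst measurable_fst.
have phiK z : (`|phi z| <= K ^+ 2)%R.
  by rewrite normrM expr2; exact: ler_pM (HK _) (HK _).
transitivity (\int[distribution P Phi]_z (phi z)%:E).
  rewrite integral_distribution //; first exact/measurable_EFinP.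
  exact: bounded_integrable (measurableT_comp mphi mPhi) (fun w => phiK _).
rewrite (eq_measure_integral ((sample_law P mD \x PX) \x PX)) => [|A mA _]; last first.
  exact (joint_law_triple mD (mX i) (mX j) (indep_sample_triple ind ltin ltjn neqij) mA).
have iphi : ((sample_law P mD \x PX : probability _ R) \x PX).-integrable setT (EFin \o phi).
  exact: bounded_integrable mphi phiK.
rewrite -(integral12_prod_meas1 iphi).
apply: integral0_eq => z _; rewrite /fubini_F /=.
under eq_integral do rewrite /phi /= EFinM.
rewrite integralZl ?H_centered ?mule0 //.
exact: bounded_integrable (measurable_fun_pair2 _ mH) (fun y => HK _).
Qed.

Lemma second_moment_centered_sum :
  \int[P]_w ((\sum_(i < n) HD i w) ^+ 2)%:E <= (n%:R * K ^+ 2)%:E.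
Proof.
have integrable_HD2 i j : P.-integrable setT (fun w => (HD i w * HD j w)%:E).
  exact: bounded_integrable (measurable_funM (mHD i) (mHD j)) (HD2K i j).
under eq_integral do rewrite expr2 mulr_suml -sumEFin.
rewrite integral_sum //; last first.
  move=> i; under eq_fun do rewrite mulr_sumr -sumEFin.
  by apply: integrable_sum => // j _.
apply: (@le_trans _ _ (\sum_(i < n) (K ^+ 2)%:E)); last first.
  by rewrite sumEFin sumr_const card_ord mulr_natl.
apply: lee_sum => i _.
under eq_integral do rewrite mulr_sumr -sumEFin.
rewrite integral_sum // (bigD1 i) //= big1 ?adde0 => [|j neqji]; last first.
  by apply: integral_cross_term; rewrite // eq_sym.
apply: (@le_trans _ _ (\int[P]_w (K ^+ 2)%:E)).
  apply: le_integral => // [|w _]; first exact: finite_measure_integrable_cst.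
  by rewrite lee_fin (le_trans (ler_norm _)) ?HD2K.
by rewrite integral_cst //= probability_setT mule1.
Qed.

End centered_sum.

Lemma Rintegral_sum d (T : measurableType d) (R : realType)
    (mu : {measure set T -> \bar R}) (D : set T) (I : Type) (s : seq I)
    (f : I -> T -> R) :
  measurable D -> (forall i, mu.-integrable D (EFin \o f i)) ->
  \int[mu]_(x in D) \sum_(i <- s) f i x = \sum_(i <- s) \int[mu]_(x in D) f i x.
Proof.
move=> mD intf; elim: s => [|i s IH].
  by under eq_Rintegral do rewrite big_nil; rewrite big_nil Rintegral_cst // mul0r.
under eq_Rintegral do rewrite big_cons; rewrite big_cons -IH RintegralD //.
rewrite (_ : _ \o _ = fun x => \sum_(j <- s) (f j x)%:E)%E.
  by apply: integrable_sum => // j _; exact: intf.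
by apply/funext => x /=; rewrite sumEFin.
Qed.

Section truncated_loss.
Context (R : realType) (dT dS : measure_display) (T : measurableType dT)
  (S : measurableType dS).
Variables (PX : probability T R) (p : nat) (h : S -> T -> 'rV[R]_p)
  (C : {fset 'rV[R]_p}) (K : R).
Hypothesis mh : forall a, measurable_fun setT (fun z : S * T => h z.1 z.2 0 a).
Hypothesis K0 : 0 <= K.

(* The truncation makes the loss bounded for every value of the auxiliary sample,
   not only almost surely; it is inactive where the estimate is bounded
   ([trunc_lossE]). *)
Definition trunc_loss (z : S * T) : R := Num.min (quantization_loss C (h z.1 z.2)) K.

Definition mean_trunc_loss (s : S) : R := \int[PX]_y trunc_loss (s, y).

Definition centered_loss (z : S * T) : R := trunc_loss z - mean_trunc_loss z.1.

Lemma trunc_loss_ge0 z : 0 <= trunc_loss z.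
Proof. by rewrite le_min quantization_loss_ge0. Qed.

Lemma trunc_loss_le z : trunc_loss z <= K.
Proof. by rewrite ge_min lexx orbT. Qed.

Lemma measurable_trunc_loss : measurable_fun setT trunc_loss.
Proof.
apply: measurable_minr (measurable_cst _).
exact: (@measurable_quantization_loss _ _ _ _ C (fun z : S * T => h z.1 z.2) mh).
Qed.

Let integrable_trunc_loss s : PX.-integrable setT (EFin \o (fun y => trunc_loss (s, y))).
Proof.
have tK y : `|trunc_loss (s, y)| <= K by rewrite ger0_norm ?trunc_loss_ge0 ?trunc_loss_le.
exact: bounded_integrable (measurable_fun_pair2 _ measurable_trunc_loss) tK.
Qed.

Lemma mean_trunc_loss_ge0 s : 0 <= mean_trunc_loss s.
Proof. by apply: Rintegral_ge0 => y _; exact: trunc_loss_ge0. Qed.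

Lemma mean_trunc_loss_le s : mean_trunc_loss s <= K.
Proof.
apply: (@le_trans _ _ (\int[PX]_y K)).
  apply: le_Rintegral => // [|y _]; last exact: trunc_loss_le.
  exact: finite_measure_integrable_cst.
by rewrite Rintegral_cst //= probability_setT mulr1.
Qed.

Lemma measurable_mean_trunc_loss : measurable_fun setT mean_trunc_loss.
Proof.
apply: measurableT_comp (fine_measurable measurableT) _.
apply: (@measurable_fun_fubini_tonelli_F _ _ _ _ _ PX (EFin \o trunc_loss)) => [|z].
  by apply/measurable_EFinP; exact: measurable_trunc_loss.
by rewrite lee_fin trunc_loss_ge0.
Qed.

Lemma measurable_centered_loss : measurable_fun setT centered_loss.
Proof.
apply: measurable_funB measurable_trunc_loss _.
exact: measurableT_comp measurable_mean_trunc_loss measurable_fst.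
Qed.

Lemma centered_loss_bounded z : `|centered_loss z| <= K.
Proof.
have := trunc_loss_ge0 z; have := trunc_loss_le z.
have := mean_trunc_loss_ge0 z.1; have := mean_trunc_loss_le z.1.
by rewrite /centered_loss ler_norml; lra.
Qed.

Lemma integral_centered_loss s : (\int[PX]_y (centered_loss (s, y))%:E = 0)%E.
Proof.
under eq_integral do rewrite /centered_loss /= EFinB.
rewrite integralB_EFin //; last exact: finite_measure_integrable_cst.
rewrite integral_cst //= probability_setT mule1 /mean_trunc_loss /Rintegral.
by rewrite fineK ?subee //; exact: integrable_fin_num (integrable_trunc_loss s).
Qed.

Lemma trunc_lossE B s y : (forall c, c \in C -> coord_bounded B c) ->
  coord_bounded B (h s y) -> 4 * B ^+ 2 * p%:R <= K ->
  trunc_loss (s, y) = quantization_loss C (h s y).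
Proof.
move=> hC hy BK; apply/min_idPl.
exact: le_trans (quantization_loss_le hC hy) BK.
Qed.

Lemma dist_mean_trunc_loss_risk B (mu : T -> 'rV[R]_p) s :
  (forall a, measurable_fun setT (fun x => mu x 0 a)) ->
  (forall x, coord_bounded B (mu x)) -> (forall y, coord_bounded B (h s y)) ->
  (forall c, c \in C -> coord_bounded B c) -> 4 * B ^+ 2 * p%:R <= K ->
  `|mean_trunc_loss s - risk PX mu C|
    <= 4 * B * \sum_(a < p) L1norm PX (fun x => h s x 0 a - mu x 0 a).
Proof.
move=> mmu muB hB hC BK; pose dev a x := h s x 0 a - mu x 0 a.
have int_absdev a : PX.-integrable setT (EFin \o (fun x => `|dev a x|)).
  apply: (@bounded_integrable _ _ _ _ _ (B + B)) => [|x].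
    exact/measurableT_comp/measurable_funB/(mmu a)/(measurable_fun_pair2 s (mh a)).
  by rewrite normr_id; exact: le_trans (ler_normB _ _) (lerD (hB x a) (muB x a)).
have int_dev a : PX.-integrable setT (EFin \o (fun x => 4 * B * `|dev a x|)).
  rewrite (_ : _ \o _ = fun x => (4 * B)%:E * (EFin \o (fun x => (`|dev a x|)%R)) x)%E.
    exact: integrableZl.
  by apply/funext => x /=; rewrite EFinM.
have lossK x : `|quantization_loss C (mu x)| <= K.
  by rewrite ger0_norm ?quantization_loss_ge0 // (le_trans (quantization_loss_le hC (muB x))).
have mloss := measurable_quantization_loss C mmu.
have mtrunc := measurable_fun_pair2 s measurable_trunc_loss.
have diffK x : `|trunc_loss (s, x) - quantization_loss C (mu x)| <= K + K.
  apply: le_trans (ler_normB _ _) (lerD _ (lossK x)).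
  by rewrite ger0_norm ?trunc_loss_ge0 ?trunc_loss_le.
have mdiff : measurable_fun setT (fun x => trunc_loss (s, x) - quantization_loss C (mu x)).
  exact: measurable_funB.
rewrite /mean_trunc_loss -[risk _ _ _]/(\int[PX]_x quantization_loss C (mu x)).
rewrite -RintegralB //; last exact: bounded_integrable mloss lossK.
apply: le_trans (le_normr_Rintegral _ _) _ => //; first exact: bounded_integrable mdiff diffK.
rewrite mulr_sumr.
under eq_bigr do rewrite -[L1norm _ _]/(\int[PX]_x `|dev _ x|) -RintegralZl //.
rewrite -Rintegral_sum //; apply: le_Rintegral => //.
- apply: (@bounded_integrable _ _ _ _ _ (K + K)) => [|x]; first exact: measurableT_comp.
  by rewrite normr_id.
- rewrite (_ : _ \o _ = fun x => \sum_(a < p) (4 * B * `|dev a x|)%:E)%E.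
    by apply: integrable_sum => // a _; exact: int_dev.
  by apply/funext => x /=; rewrite sumEFin.
move=> x _; rewrite -mulr_sumr (trunc_lossE hC (hB x) BK).
exact: quantization_loss_lipschitz hC (hB x) (muB x).
Qed.

End truncated_loss.

Section whp.
Context (R : realType) (dO : measure_display) (Omega : measurableType dO).
Variable P : probability Omega R.

Lemma whp_sub (eps : R) (E F : set Omega) : E `<=` F -> whp P eps E -> whp P eps F.
Proof. by move=> EF [A [mA [PA AE]]]; exists A; do 2 split => //; exact: subset_trans EF. Qed.

Lemma whp_off_null_union (eps : R) (N E F : set Omega) :
  measurable N -> P N = 0%E -> measurable E -> (P E <= eps%:E)%E ->
  (forall w, ~ N w -> ~ E w -> F w) -> whp P eps F.
Proof.
move=> mN PN0 mE PE NEF; exists (~` (E `|` N)); split; first exact/measurableC/measurableU.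
split; last by move=> w /= /not_orP[]; move/[swap]; exact: NEF.
rewrite probability_setC ?measureU0 //; last exact: measurableU.
by rewrite EFinB; apply: leeB.
Qed.

End whp.

Lemma sumr_le_card_bigmax (R : realType) (p : nat) (f : 'I_p -> R) :
  \sum_(a < p) f a <= p%:R * \big[Num.max/0]_(a < p) f a.
Proof.
apply: (@le_trans _ _ (\sum_(a < p) \big[Num.max/0]_(b < p) f b)).
  by apply: ler_sum => a _; exact: le_bigmax.
by rewrite sumr_const card_ord mulr_natl.
Qed.

Section empirical_risk.
Context (R : realType) (dO dT dS : measure_display) (Omega : measurableType dO)
  (T : measurableType dT) (S : measurableType dS).
Variables (P : probability Omega R) (PX : probability T R).
Variables (p : nat) (mu : T -> 'rV[R]_p) (h : S -> T -> 'rV[R]_p)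
  (C : {fset 'rV[R]_p}) (B : R).
Variables (D : Omega -> S) (X : nat -> Omega -> T) (n : nat).
Hypotheses (mD : measurable_fun setT D) (mX : forall i, measurable_fun setT (X i)).
Hypotheses (mmu : forall a, measurable_fun setT (fun x => mu x 0 a))
  (mh : forall a, measurable_fun setT (fun z : S * T => h z.1 z.2 0 a)).
Hypothesis ind : indep_sample P PX D X n.
Hypotheses (muB : forall x, coord_bounded B (mu x))
  (CB : forall c, c \in C -> coord_bounded B c).

Let K := 4 * B ^+ 2 * p%:R.

Let K0 : 0 <= K.
Proof. by apply: mulr_ge0 => //; apply: mulr_ge0 => //; exact: sqr_ge0. Qed.

Let Y w := \sum_(i < n) centered_loss PX h C K (D w, X i w).

Let mY : measurable_fun setT Y.
Proof.
apply: measurable_sum => i; apply: measurableT_comp (measurable_centered_loss PX C mh K0) _.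
exact: measurable_fun_pair.
Qed.

Lemma centered_sum_tail eps : 0 < eps -> (0 < n)%N ->
  (P [set w | ((K + 1) / Num.sqrt eps * Num.sqrt n%:R <= `|Y w|)%R] <= eps%:E)%E.
Proof.
move=> eps0 n0; set t := _ * _.
have t0 : 0 < t.
  apply: mulr_gt0; last by rewrite sqrtr_gt0 ltr0n.
  by apply: divr_gt0; [have := K0; lra|rewrite sqrtr_gt0].
have := chebyshev_second_moment P mY t0.
have := second_moment_centered_sum mD mX ind (measurable_centered_loss PX C mh K0)
  (centered_loss_bounded PX C mh K0) (integral_centered_loss PX C mh K0).
move=> /[swap] /le_trans /[apply].
rewrite -(fineK (fin_num_measure _ _ (measurable_norm_ge t mY))) -EFinM !lee_fin => tail.
have t2 : t ^+ 2 * eps = (K + 1) ^+ 2 * n%:R.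
  rewrite /t !exprMn sqr_sqrtr ?ler0n // exprVn sqr_sqrtr ?ltW //.
  by field; rewrite gt_eqF.
rewrite -(ler_pM2l (exprn_gt0 2 t0)); apply: le_trans tail _; rewrite t2.
rewrite mulrC; apply: ler_wpM2r => //; rewrite ler_sqr ?nnegrE; have := K0; lra.
Qed.

Lemma empirical_riskE w : (0 < n)%N -> (forall y, coord_bounded B (h (D w) y)) ->
  n%:R^-1 * \sum_(i < n) quantization_loss C (h (D w) (X i w)) - risk PX mu C =
  n%:R^-1 * Y w + (mean_trunc_loss PX h C K (D w) - risk PX mu C).
Proof.
move=> n0 hB; rewrite /Y /centered_loss /=.
under eq_bigr do rewrite -(trunc_lossE CB (hB _) (lexx K))
  -(subrK (mean_trunc_loss PX h C K (D w)) (trunc_loss _ _ _ _)).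
rewrite big_split /= sumr_const card_ord -[mean_trunc_loss _ _ _ _ _ *+ _]mulr_natl.
rewrite mulrDr mulrA mulVf ?mul1r ?addrA //.
by rewrite pnatr_eq0 -lt0n.
Qed.

Lemma empirical_risk_deviation eps : 0 < eps -> (0 < n)%N ->
  almost_everywhere P [set w | forall y, coord_bounded B (h (D w) y)] ->
  whp P eps [set w |
    `|n%:R^-1 * \sum_(i < n) quantization_loss C (h (D w) (X i w)) - risk PX mu C|
    <= (K + 1) / Num.sqrt eps / Num.sqrt n%:R
       + 4 * B * \sum_(a < p) L1norm PX (fun x => h (D w) x 0 a - mu x 0 a)].
Proof.
move=> eps0 n0 [N [mN PN0 badN]].
apply: (whp_off_null_union mN PN0 (measurable_norm_ge _ mY) (centered_sum_tail eps0 n0)).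
move=> w Nw /negP; rewrite -ltNge => Yt.
have hB : forall y, coord_bounded B (h (D w) y) by apply: contrapT => /badN /Nw.
rewrite /= empirical_riskE //; apply: le_trans (ler_normD _ _) (lerD _ _); last first.
  exact: dist_mean_trunc_loss_risk.
set sq := Num.sqrt n%:R; have sq0 : 0 < sq by rewrite sqrtr_gt0 ltr0n.
have se0 : 0 < Num.sqrt eps by rewrite sqrtr_gt0.
have -> : (K + 1) / Num.sqrt eps / sq = n%:R^-1 * ((K + 1) / Num.sqrt eps * sq).
  rewrite -[n%:R](sqr_sqrtr (ler0n _ n)) -/sq; field.
  by rewrite (gt_eqF sq0) (gt_eqF se0).
rewrite normrM ger0_norm ?invr_ge0 ?ler0n // ler_wpM2l ?invr_ge0 ?ler0n //.
exact: ltW.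
Qed.

End empirical_risk.

Theorem lemmaA4
  (R : realType)
  (dO : measure_display) (Omega : measurableType dO) (P : probability Omega R)
  (dT : measure_display) (T : measurableType dT) (PX : probability T R)
  (dS : measure_display) (S : measurableType dS)
  (p k : nat) (mu : T -> 'rV[R]_p)
  (X : nat -> Omega -> T) (D : nat -> Omega -> S)
  (muhat : nat -> S -> T -> 'rV[R]_p)
  (kappa alpha B : R) (Cstar : {fset 'rV[R]_p}) :
  (* covariates and auxiliary samples are random elements *)
  (forall i, measurable_fun [set: Omega] (X i)) ->
  (forall n, measurable_fun [set: Omega] (D n)) ->
  (* regression functions and the estimator are measurable *)
  (forall a : 'I_p, measurable_fun [set: T] (fun x => mu x 0 a)) ->
  (forall n (a : 'I_p),
     measurable_fun [set: S * T] (fun sx : S * T => muhat n sx.1 sx.2 0 a)) ->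
  (* X_0, ..., X_{n-1} iid ~ PX, independent of the sample D n defining muhat *)
  (forall n, indep_sample P PX (D n) X n) ->
  (* margin condition *)
  0 < kappa -> 0 < alpha -> margin_condition PX mu k kappa alpha ->
  (* boundedness *)
  (forall (a : 'I_p) x, `|mu x 0 a| <= B) ->
  (forall n, almost_everywhere P
     [set w | forall (a : 'I_p) x, `|muhat n (D n w) x 0 a| <= B]) ->
  (* max_a || muhat_a - mu_a ||_oo = o_P(1) *)
  littleoP1 P (fun n w =>
    \big[Num.max/0]_(a < p) supnorm (fun x => muhat n (D n w) x 0 a - mu x 0 a)) ->
  optimal PX mu k Cstar ->
  bigO_in_prob P
    (fun n w =>
       (n%:R)^-1 * \sum_(i < n)
          sqn (muhat n (D n w) (X i w) - proj_codebook Cstar (muhat n (D n w) (X i w)))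
       - risk PX mu Cstar)
    (fun n w =>
       (Num.sqrt n%:R)^-1
       + \big[Num.max/0]_(a < p)
           L1norm PX (fun x => muhat n (D n w) x 0 a - mu x 0 a)
       + (\big[Num.max/0]_(a < p)
           supnorm (fun x => muhat n (D n w) x 0 a - mu x 0 a)) `^ (alpha + 1)
       + kappa^-1 * \big[Num.max/0]_(a < p)
           (supnorm (fun x => muhat n (D n w) x 0 a - mu x 0 a)
            * L1norm PX (fun x => muhat n (D n w) x 0 a - mu x 0 a))).
Proof.
move=> mX mD mmu mmh ind kappa0 _ _ hmuB hmhB _ opt.
have muB x : coord_bounded `|B| (mu x) by move=> a; exact: le_trans (hmuB a x) (ler_norm _).
have CB c : c \in Cstar -> coord_bounded `|B| c by move=> /opt.1.2[x <-].
have muhatB n : almost_everywhere P [set w | forall y, coord_bounded `|B| (muhat n (D n w) y)].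
  case: (hmhB n) => N [mN PN0 badN]; exists N; split => // w /= bad; apply: badN => good.
  by apply: bad => y a; exact: le_trans (good a y) (ler_norm _).
move=> eps eps0; pose M1 := (4 * `|B| ^+ 2 * p%:R + 1) / Num.sqrt eps.
pose Q := 4 * `|B| * p%:R.
have M10 : 0 <= M1 by rewrite divr_ge0 ?addr_ge0 ?mulr_ge0.
have Q0 : 0 <= Q by rewrite !mulr_ge0.
exists (M1 + Q + 1); split; first lra.
exists 1%N => n n1.
have := empirical_risk_deviation (mD n) mX mmu (mmh n) (ind n) muB CB eps0 n1 (muhatB n).
apply: whp_sub.
move=> w /= /le_trans; apply; rewrite -/M1.
set mL := \big[Num.max/0]_(a < p) L1norm _ _; set r3 := _ `^ _; set r4 := kappa^-1 * _.
have : 4 * `|B| * \sum_(a < p) L1norm PX (fun x => muhat n (D n w) x 0 a - mu x 0 a) <= Q * mL.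
  rewrite /Q -[_ * p%:R * _]mulrA; apply: ler_wpM2l; first by rewrite mulr_ge0.
  exact: sumr_le_card_bigmax.
have : 0 <= (Num.sqrt (n%:R : R))^-1 by rewrite invr_ge0 sqrtr_ge0.
have : 0 <= mL by exact: bigmax_ge_id.
have : 0 <= r3 by exact: powR_ge0.
have : 0 <= r4 by apply: mulr_ge0; [rewrite invr_ge0 ltW|exact: bigmax_ge_id].
nra.
Qed.
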